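(* Let $b(r)$ be a smooth positive function on an open interval of $r>0$ and consider the metric $ds^2=-b^2dt^2+b^{-2}dr^2+r^2(d\theta^2+\sin^2\theta\,d\phi^2)$. Let $\kappa_1,\kappa_2,q$ be constants, set $\Lambda=-\kappa_1$, $\lambda=-\kappa_2$, and let $$K_{kl}=\kappa_2r^2\,u_ku_l+(\kappa_1+2\kappa_2r^2)g_{kl}-\kappa_2r^2\,\chi_k\chi_l,\qquad T_{kl}=\frac{q^2}{r^4}\left(2u_ku_l-2\chi_k\chi_l+g_{kl}\right).$$ Then the conformal Killing gravity field equations $R_{kl}-\tfrac12Rg_{kl}=T_{kl}+K_{kl}$ hold if and only if there is a constant $M$ such that $$b^2(r)=1-\frac{2M}{r}-\frac{\Lambda}{3}r^2+\frac{q^2}{r^2}-\frac{\lambda}{5}r^4 .$$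
   Context: $u_k$ is the unit timelike covector with components $u_0=-b$ and all others zero; $\chi_k$ is the unit radial covector with $\chi_r=1/b$ and all others zero. $R_{kl}$ is the Ricci tensor and $R$ the scalar curvature. $T_{kl}$ is the stress-energy tensor of linear electrodynamics (Lagrangian $\mathscr L(F)=F$) with Coulomb electric field $\mathbb E=q_e/r^2$ and monopole magnetic field $\mathbb B=q_m/r^2$, $q^2=q_e^2+q_m^2$, i.e. $T_{kl}=2(\mathbb E^2+\mathbb B^2)(u_ku_l-\chi_k\chi_l)+(\mathbb E^2+\mathbb B^2)g_{kl}$. $K_{kl}$ is the divergence-free conformal Killing tensor $\mathsf Au_ku_l+\mathsf Bg_{kl}+\mathsf C\chi_k\chi_l$ with $\mathsf A=\kappa_2 r^2-2\kappa_3b^2$, $\mathsf B=\kappa_1+2\kappa_2r^2+\kappa_3b^2$, $\mathsf C=-\kappa_2r^2$, specialized to $\kappa_3=0$ (the case $h=bf_1=1$). *)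

From Stdlib Require Import Reals Lra.
From Coquelicot Require Import Coquelicot.
Open Scope R_scope.

(* A point of the coordinate chart: x 0 = t, x 1 = r, x 2 = theta, x 3 = phi. *)
Definition coord := nat -> R.

Definition upd (x : coord) (i : nat) (s : R) : coord :=
  fun j => if Nat.eqb j i then s else x j.

Definition pd (i : nat) (F : coord -> R) (x : coord) : R :=
  Derive (fun s => F (upd x i s)) (x i).

Definition sum4 (f : nat -> R) : R := f 0%nat + f 1%nat + f 2%nat + f 3%nat.

Definition tensor2 := nat -> nat -> coord -> R.

Definition christoffel (g ginv : tensor2) (k i j : nat) (x : coord) : R :=
  / 2 * sum4 (fun l => ginv k l x *
        (pd i (g j l) x + pd j (g i l) x - pd l (g i j) x)).

Definition ricci (g ginv : tensor2) (i j : nat) (x : coord) : R :=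
  sum4 (fun k =>
    pd k (christoffel g ginv k i j) x - pd j (christoffel g ginv k i k) x
    + sum4 (fun l => christoffel g ginv k k l x * christoffel g ginv l i j x
                     - christoffel g ginv k j l x * christoffel g ginv l i k x)).

Definition scalar_curv (g ginv : tensor2) (x : coord) : R :=
  sum4 (fun i => sum4 (fun j => ginv i j x * ricci g ginv i j x)).

Definition einstein (g ginv : tensor2) (i j : nat) (x : coord) : R :=
  ricci g ginv i j x - / 2 * scalar_curv g ginv x * g i j x.

Definition diag_metric (d : nat -> coord -> R) : tensor2 :=
  fun i j x => if Nat.eqb i j then d i x else 0.
Definition diag_metric_inv (d : nat -> coord -> R) : tensor2 :=
  fun i j x => if Nat.eqb i j then / d i x else 0.

Definition sss_diag (b : R -> R) (i : nat) (x : coord) : R :=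
  match i with
  | 0%nat => - (b (x 1%nat)) ^ 2
  | 1%nat => / (b (x 1%nat)) ^ 2
  | 2%nat => (x 1%nat) ^ 2
  | _ => (x 1%nat) ^ 2 * (sin (x 2%nat)) ^ 2
  end.

Definition gmet (b : R -> R) : tensor2 := diag_metric (sss_diag b).
Definition ginvmet (b : R -> R) : tensor2 := diag_metric_inv (sss_diag b).

(* unit timelike covector u_k (u_0 = -b) and unit radial covector chi_k (chi_r = 1/b) *)
Definition ucov (b : R -> R) (k : nat) (x : coord) : R :=
  if Nat.eqb k 0 then - b (x 1%nat) else 0.
Definition chicov (b : R -> R) (k : nat) (x : coord) : R :=
  if Nat.eqb k 1 then / b (x 1%nat) else 0.

Definition Tem (q : R) (b : R -> R) (k l : nat) (x : coord) : R :=
  q ^ 2 / (x 1%nat) ^ 4 *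
  (2 * ucov b k x * ucov b l x - 2 * chicov b k x * chicov b l x + gmet b k l x).

Definition Kckg (k1 k2 : R) (b : R -> R) (k l : nat) (x : coord) : R :=
  k2 * (x 1%nat) ^ 2 * ucov b k x * ucov b l x
  + (k1 + 2 * k2 * (x 1%nat) ^ 2) * gmet b k l x
  - k2 * (x 1%nat) ^ 2 * chicov b k x * chicov b l x.

(** In terms of f = b^2 the field equations reduce to two radial ODEs. Both are
    captured by the mass function
      m(r) = r/2 (1 - f + kappa1 r^2/3 + q^2/r^2 + kappa2 r^4/5):
    the Einstein tensor minus the sources equals -(2 m'/r^2) g on the (t, r)
    block and -(m''/r) g on the sphere. So the field equations hold iff
    m' = m'' = 0 on the interval, i.e. iff m is a constant M, which is the
    claimed form of b^2. *)
From Stdlib Require Import Reals Lra Lia.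
From Coquelicot Require Import Coquelicot.
Open Scope R_scope.

Lemma locally_open_interval (a : R) (c : Rbar) (r : R) :
  a < r -> Rbar_lt r c -> locally r (fun s => a < s /\ Rbar_lt s c).
Proof.
  intros Har Hrc.
  apply filter_and; [exact (open_gt a r Har) | exact (open_Rbar_lt' _ _ Hrc)].
Qed.

Lemma Derive_locally_const (h : R -> R) (C s : R) :
  locally s (fun t => h t = C) -> Derive h s = 0.
Proof.
  intros Hloc. rewrite (Derive_ext_loc _ (fun _ => C) _ Hloc). apply Derive_const.
Qed.

Lemma Derive_zero_iff_const (h : R -> R) (a : R) (c : Rbar) :
  Rbar_lt a c ->
  (forall s, a < s -> Rbar_lt s c -> ex_derive h s) ->
  (forall s, a < s -> Rbar_lt s c -> Derive h s = 0) <->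
  exists C, forall s, a < s -> Rbar_lt s c -> h s = C.
Proof.
  intros Hac Hder. split.
  - intros Hzero.
    assert (Hderiv : forall s, a < s -> Rbar_lt s c -> is_derive h s 0).
    { intros s Has Hsc. rewrite <- (Hzero s Has Hsc). apply Derive_correct, Hder; auto. }
    assert (Hbase : exists r0, a < r0 /\ Rbar_lt r0 c).
    { destruct c as [c'| |]; simpl in *; try contradiction.
      - exists ((a + c') / 2); split; lra.
      - exists (a + 1); split; [lra | exact I]. }
    destruct Hbase as [r0 [Har0 Hr0c]].
    exists (h r0). intros r Har Hrc.
    assert (Hbetween : forall y, Rmin r0 r <= y <= Rmax r0 r -> a < y /\ Rbar_lt y c).
    { intros y [Hy1 Hy2]. unfold Rmin, Rmax in *.
      destruct (Rle_dec r0 r); destruct c as [c'| |]; simpl in *; split; try lra; auto. }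
    destruct (MVT_gen h r0 r (fun _ => 0)) as [z [_ Hz]].
    + intros y Hy. destruct (Hbetween y) as [Hay Hyc]; [lra | auto].
    + intros y Hy. destruct (Hbetween y Hy) as [Hay Hyc].
      apply derivable_continuous_pt. exists 0. apply is_derive_Reals; auto.
    + lra.
  - intros [C HC] s Has Hsc.
    apply (Derive_locally_const _ C).
    eapply filter_imp; [| exact (locally_open_interval a c s Has Hsc)].
    intros t [Hat Htc]; auto.
Qed.

Ltac destruct_index k := destruct k as [|[|[|[|k]]]]; [| | | | lia].

(* [auto_derive] leaves [b] and [Derive b] eta-expanded in its side conditions. *)
Ltac fold_eta b :=
  repeat change (fun x : R => b x) with b;
  repeat change (fun x : R => Derive b x) with (Derive b).

Ltac nonzero_side :=
  repeat split; auto;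
  repeat apply Rmult_integral_contrapositive_currified; auto; try lra.

Section StaticSphericallySymmetric.

Variables (b : R -> R) (a : R) (c : Rbar).
Hypothesis a_ge0 : 0 <= a.
Hypothesis b_pos : forall r, a < r -> Rbar_lt r c -> 0 < b r.
Hypothesis b_smooth : forall (n : nat) r, a < r -> Rbar_lt r c -> ex_derive_n b n r.

Lemma ex_derive_b r : a < r -> Rbar_lt r c -> ex_derive b r.
Proof. exact (b_smooth 1 r). Qed.

Lemma ex_derive_Derive_b r : a < r -> Rbar_lt r c -> ex_derive (Derive b) r.
Proof. exact (b_smooth 2 r). Qed.

Definition in_chart (x : coord) : Prop :=
  a < x 1%nat /\ Rbar_lt (x 1%nat) c /\ 0 < x 2%nat < PI.

Lemma in_chart_nonzero x :
  in_chart x -> b (x 1%nat) <> 0 /\ x 1%nat <> 0 /\ sin (x 2%nat) <> 0.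
Proof.
  intros [Har [Hrc Hth]]. split; [apply Rgt_not_eq, b_pos; auto |]. split; [lra |].
  apply Rgt_not_eq, sin_gt_0; lra.
Qed.

Lemma in_chart_locally x :
  in_chart x -> forall m, locally (x m) (fun s => in_chart (upd x m s)).
Proof.
  intros [Har [Hrc Hth]] m.
  destruct m as [|[|[|m]]].
  - apply filter_forall; intros s; unfold in_chart, upd; simpl; tauto.
  - eapply filter_imp; [| exact (locally_open_interval a c _ Har Hrc)].
    intros s [Has Hsc]; unfold in_chart, upd; simpl; tauto.
  - eapply filter_imp;
      [| apply filter_and; [apply (open_gt 0); apply Hth | apply (open_lt PI); apply Hth]].
    intros s [Hs0 HsPI]; unfold in_chart, upd; simpl; tauto.
  - apply filter_forall; intros s; unfold in_chart, upd; simpl; tauto.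
Qed.

Definition sss_dmetric (i j l : nat) (x : coord) : R :=
  let r := x 1%nat in let th := x 2%nat in
  match i, j, l with
  | 1%nat, 0%nat, 0%nat => -2 * b r * Derive b r
  | 1%nat, 1%nat, 1%nat => -2 * Derive b r / b r ^ 3
  | 1%nat, 2%nat, 2%nat => 2 * r
  | 1%nat, 3%nat, 3%nat => 2 * r * sin th ^ 2
  | 2%nat, 3%nat, 3%nat => 2 * r ^ 2 * sin th * cos th
  | _, _, _ => 0
  end.

Lemma pd_gmet x i j l : in_chart x -> (i < 4)%nat -> (j < 4)%nat -> (l < 4)%nat ->
  pd i (gmet b j l) x = sss_dmetric i j l x.
Proof.
  intros Hx Hi Hj Hl.
  destruct (in_chart_nonzero x Hx) as [Hb _].
  destruct Hx as [Har [Hrc _]].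
  pose proof (ex_derive_b _ Har Hrc) as Hdb.
  destruct_index i; destruct_index j; destruct_index l;
  unfold pd, gmet, diag_metric, sss_diag, upd, sss_dmetric; simpl;
  apply is_derive_unique; auto_derive; fold_eta b; try nonzero_side; try field; auto.
Qed.

Definition sss_christoffel (k i j : nat) (x : coord) : R :=
  let r := x 1%nat in let th := x 2%nat in
  match k, i, j with
  | 0%nat, 0%nat, 1%nat | 0%nat, 1%nat, 0%nat => Derive b r / b r
  | 1%nat, 0%nat, 0%nat => b r ^ 3 * Derive b r
  | 1%nat, 1%nat, 1%nat => - Derive b r / b r
  | 1%nat, 2%nat, 2%nat => - r * b r ^ 2
  | 1%nat, 3%nat, 3%nat => - r * b r ^ 2 * sin th ^ 2
  | 2%nat, 1%nat, 2%nat | 2%nat, 2%nat, 1%nat => / r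
  | 2%nat, 3%nat, 3%nat => - sin th * cos th
  | 3%nat, 1%nat, 3%nat | 3%nat, 3%nat, 1%nat => / r
  | 3%nat, 2%nat, 3%nat | 3%nat, 3%nat, 2%nat => cos th / sin th
  | _, _, _ => 0
  end.

Lemma christoffel_gmet x k i j :
  in_chart x -> (k < 4)%nat -> (i < 4)%nat -> (j < 4)%nat ->
  christoffel (gmet b) (ginvmet b) k i j x = sss_christoffel k i j x.
Proof.
  intros Hx Hk Hi Hj.
  destruct (in_chart_nonzero x Hx) as [Hb [Hr Hs]].
  unfold christoffel, sum4.
  rewrite !pd_gmet by (auto; lia).
  destruct_index k; destruct_index i; destruct_index j;
  unfold ginvmet, diag_metric_inv, sss_diag, sss_dmetric, sss_christoffel; simpl;
  field; auto.
Qed.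

Definition sss_dchristoffel (m k i j : nat) (x : coord) : R :=
  let r := x 1%nat in let th := x 2%nat in
  let B := b r in let B1 := Derive b r in let B2 := Derive (Derive b) r in
  match m, k, i, j with
  | 1%nat, 0%nat, 0%nat, 1%nat | 1%nat, 0%nat, 1%nat, 0%nat => B2 / B - B1 ^ 2 / B ^ 2
  | 1%nat, 1%nat, 0%nat, 0%nat => 3 * B ^ 2 * B1 ^ 2 + B ^ 3 * B2
  | 1%nat, 1%nat, 1%nat, 1%nat => - (B2 / B - B1 ^ 2 / B ^ 2)
  | 1%nat, 1%nat, 2%nat, 2%nat => - (B ^ 2 + 2 * r * B * B1)
  | 1%nat, 1%nat, 3%nat, 3%nat => - (B ^ 2 + 2 * r * B * B1) * sin th ^ 2
  | 1%nat, 2%nat, 1%nat, 2%nat | 1%nat, 2%nat, 2%nat, 1%nat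
  | 1%nat, 3%nat, 1%nat, 3%nat | 1%nat, 3%nat, 3%nat, 1%nat => - / r ^ 2
  | 2%nat, 1%nat, 3%nat, 3%nat => - r * B ^ 2 * 2 * sin th * cos th
  | 2%nat, 2%nat, 3%nat, 3%nat => - (cos th ^ 2 - sin th ^ 2)
  | 2%nat, 3%nat, 2%nat, 3%nat | 2%nat, 3%nat, 3%nat, 2%nat =>
      - (sin th ^ 2 + cos th ^ 2) / sin th ^ 2
  | _, _, _, _ => 0
  end.

Lemma pd_christoffel_gmet x m k i j : in_chart x ->
  (m < 4)%nat -> (k < 4)%nat -> (i < 4)%nat -> (j < 4)%nat ->
  pd m (christoffel (gmet b) (ginvmet b) k i j) x = sss_dchristoffel m k i j x.
Proof.
  intros Hx Hm Hk Hi Hj.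
  destruct (in_chart_nonzero x Hx) as [Hb [Hr Hs]].
  pose proof (in_chart_locally x Hx m) as Hloc.
  destruct Hx as [Har [Hrc _]].
  pose proof (ex_derive_b _ Har Hrc) as Hdb.
  pose proof (ex_derive_Derive_b _ Har Hrc) as Hddb.
  unfold pd.
  rewrite (Derive_ext_loc _ (fun s => sss_christoffel k i j (upd x m s))).
  2: { eapply filter_imp; [| exact Hloc]. intros s Hs'. apply christoffel_gmet; auto. }
  destruct_index m; destruct_index k; destruct_index i; destruct_index j;
  unfold sss_christoffel, upd, sss_dchristoffel; simpl;
  apply is_derive_unique; auto_derive; fold_eta b; try nonzero_side; try field; auto.
Qed.

Definition sss_ricci (i j : nat) (x : coord) : R :=
  let r := x 1%nat in let th := x 2%nat in
  let B := b r in let B1 := Derive b r in let B2 := Derive (Derive b) r in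
  let P := B1 ^ 2 + B * B2 + 2 * B * B1 / r in
  match i, j with
  | 0%nat, 0%nat => B ^ 2 * P
  | 1%nat, 1%nat => - P / B ^ 2
  | 2%nat, 2%nat => 1 - B ^ 2 - 2 * r * B * B1
  | 3%nat, 3%nat => sin th ^ 2 * (1 - B ^ 2 - 2 * r * B * B1)
  | _, _ => 0
  end.

Lemma ricci_gmet x i j : in_chart x -> (i < 4)%nat -> (j < 4)%nat ->
  ricci (gmet b) (ginvmet b) i j x = sss_ricci i j x.
Proof.
  intros Hx Hi Hj.
  destruct (in_chart_nonzero x Hx) as [Hb [Hr Hs]].
  unfold ricci, sum4.
  rewrite !pd_christoffel_gmet, !christoffel_gmet by (auto; lia).
  destruct_index i; destruct_index j;
  unfold sss_christoffel, sss_dchristoffel, sss_ricci; simpl; try field; auto.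
Qed.

Variables (q kappa1 kappa2 : R).

Definition mass (s : R) : R :=
  (s - s * b s ^ 2 + kappa1 * s ^ 3 / 3 + q ^ 2 / s + kappa2 * s ^ 5 / 5) / 2.

Lemma Derive_mass r : a < r -> Rbar_lt r c ->
  Derive mass r = (1 - b r ^ 2 - 2 * r * b r * Derive b r
                   + kappa1 * r ^ 2 - q ^ 2 / r ^ 2 + kappa2 * r ^ 4) / 2.
Proof.
  intros Har Hrc.
  assert (Hr : r <> 0) by lra.
  pose proof (ex_derive_b _ Har Hrc) as Hdb.
  apply is_derive_unique; unfold mass; auto_derive; fold_eta b;
    [nonzero_side | field; auto].
Qed.

Lemma Derive2_mass r : a < r -> Rbar_lt r c ->
  Derive (Derive mass) r =
  - r * (Derive b r ^ 2 + b r * Derive (Derive b) r + 2 * b r * Derive b r / r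
         - kappa1 - q ^ 2 / r ^ 4 - 2 * kappa2 * r ^ 2).
Proof.
  intros Har Hrc.
  assert (Hr : r <> 0) by lra.
  pose proof (ex_derive_b _ Har Hrc) as Hdb.
  pose proof (ex_derive_Derive_b _ Har Hrc) as Hddb.
  rewrite (Derive_ext_loc _ (fun s => (1 - b s ^ 2 - 2 * s * b s * Derive b s
                   + kappa1 * s ^ 2 - q ^ 2 / s ^ 2 + kappa2 * s ^ 4) / 2)).
  2: { eapply filter_imp; [| exact (locally_open_interval a c r Har Hrc)].
       intros s [Has Hsc]. apply Derive_mass; auto. }
  apply is_derive_unique; auto_derive; fold_eta b; [nonzero_side | field; auto].
Qed.

Lemma einstein_sub_sources x k l : in_chart x -> (k < 4)%nat -> (l < 4)%nat ->
  einstein (gmet b) (ginvmet b) k l x - (Tem q b k l x + Kckg kappa1 kappa2 b k l x)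
  = - (if (k <? 2)%nat then 2 * Derive mass (x 1%nat) / x 1%nat ^ 2
       else Derive (Derive mass) (x 1%nat) / x 1%nat) * gmet b k l x.
Proof.
  intros Hx Hk Hl.
  destruct (in_chart_nonzero x Hx) as [Hb [Hr Hs]].
  unfold einstein, scalar_curv, sum4.
  rewrite !ricci_gmet by (auto; lia).
  destruct Hx as [Har [Hrc _]].
  rewrite Derive_mass, Derive2_mass by auto.
  destruct_index k; destruct_index l;
  unfold sss_ricci, Tem, Kckg, ucov, chicov, gmet, ginvmet, diag_metric, diag_metric_inv,
    sss_diag; simpl; field; auto.
Qed.

Lemma field_eqs_at_iff x : in_chart x ->
  (forall k l, (k < 4)%nat -> (l < 4)%nat ->
     einstein (gmet b) (ginvmet b) k l x = Tem q b k l x + Kckg kappa1 kappa2 b k l x)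
  <-> Derive mass (x 1%nat) = 0 /\ Derive (Derive mass) (x 1%nat) = 0.
Proof.
  intros Hx.
  destruct (in_chart_nonzero x Hx) as [Hb [Hr Hs]].
  split.
  - intros Heq. split.
    + transitivity (- (x 1%nat ^ 2 * b (x 1%nat) ^ 2) / 2 *
        (einstein (gmet b) (ginvmet b) 1 1 x - (Tem q b 1 1 x + Kckg kappa1 kappa2 b 1 1 x))).
      * rewrite einstein_sub_sources by (auto; lia).
        unfold gmet, diag_metric, sss_diag; simpl; field; auto.
      * rewrite Heq by lia; ring.
    + transitivity (- / x 1%nat *
        (einstein (gmet b) (ginvmet b) 2 2 x - (Tem q b 2 2 x + Kckg kappa1 kappa2 b 2 2 x))).
      * rewrite einstein_sub_sources by (auto; lia).
        unfold gmet, diag_metric, sss_diag; simpl; field; auto.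
      * rewrite Heq by lia; ring.
  - intros [Hm1 Hm2] k l Hk Hl.
    apply Rminus_diag_uniq.
    rewrite einstein_sub_sources, Hm1, Hm2 by auto.
    destruct (k <? 2)%nat; unfold Rdiv; ring.
Qed.

Lemma mass_stationary_iff_const : Rbar_lt a c ->
  (forall r, a < r -> Rbar_lt r c -> Derive mass r = 0 /\ Derive (Derive mass) r = 0)
  <-> exists M, forall r, a < r -> Rbar_lt r c -> mass r = M.
Proof.
  intros Hac.
  transitivity (forall r, a < r -> Rbar_lt r c -> Derive mass r = 0).
  - split; [intros Hm r Har Hrc; apply Hm; auto |].
    intros Hm r Har Hrc. split; [auto |].
    apply (Derive_locally_const _ 0).
    eapply filter_imp; [| exact (locally_open_interval a c r Har Hrc)].
    intros s [Has Hsc]; auto.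
  - apply Derive_zero_iff_const; [exact Hac |].
    intros s Has Hsc.
    pose proof (ex_derive_b _ Has Hsc) as Hdb.
    unfold mass; auto_derive; fold_eta b; nonzero_side.
Qed.

Lemma mass_eq_iff M r : a < r ->
  mass r = M <->
  b r ^ 2 = 1 - 2 * M / r + kappa1 / 3 * r ^ 2 + q ^ 2 / r ^ 2 + kappa2 / 5 * r ^ 4.
Proof.
  intros Har.
  assert (Hr : r <> 0) by lra.
  unfold mass; split; intros HM.
  - rewrite <- HM; field; auto.
  - rewrite HM; field; auto.
Qed.

End StaticSphericallySymmetric.

Theorem proposition14 (b : R -> R) (a : R) (c : Rbar)
  (kappa1 kappa2 q Lambda lambda : R) :
  0 <= a -> Rbar_lt a c ->
  (forall r, a < r -> Rbar_lt r c -> 0 < b r) ->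
  (forall (n : nat) r, a < r -> Rbar_lt r c -> ex_derive_n b n r) ->
  Lambda = - kappa1 -> lambda = - kappa2 ->
  ((forall x : coord, a < x 1%nat -> Rbar_lt (x 1%nat) c ->
      0 < x 2%nat < PI ->
      forall k l : nat, (k < 4)%nat -> (l < 4)%nat ->
      einstein (gmet b) (ginvmet b) k l x
        = Tem q b k l x + Kckg kappa1 kappa2 b k l x)
   <->
   exists M : R, forall r, a < r -> Rbar_lt r c ->
     (b r) ^ 2 = 1 - 2 * M / r - Lambda / 3 * r ^ 2 + q ^ 2 / r ^ 2
                 - lambda / 5 * r ^ 4).
Proof.
  intros Ha Hac Hpos Hder -> ->.
  pose (m := mass b q kappa1 kappa2).
  transitivity (forall r, a < r -> Rbar_lt r c -> Derive m r = 0 /\ Derive (Derive m) r = 0).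
  - split.
    + intros Heq r Har Hrc.
      pose (x := fun j => if Nat.eqb j 2 then PI / 2 else r).
      assert (Hx : in_chart a c x).
      { pose proof PI_RGT_0. unfold in_chart, x; simpl; repeat split; auto; lra. }
      apply (field_eqs_at_iff _ _ _ Ha Hpos Hder _ _ _ x Hx).
      intros k l; apply Heq; apply Hx.
    + intros Hm x Har Hrc Hth.
      apply (field_eqs_at_iff _ _ _ Ha Hpos Hder _ _ _ x); [split; auto |].
      apply Hm; auto.
  - etransitivity; [exact (mass_stationary_iff_const _ _ _ Ha Hder _ _ _ Hac) |].
    split; intros [M HM]; exists M; intros r Har Hrc; specialize (HM r Har Hrc).
    + apply (mass_eq_iff _ _ Ha _ _ _ M r Har) in HM.
      rewrite HM; field; lra.
    + apply (mass_eq_iff _ _ Ha _ _ _ M r Har).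
      rewrite HM; field; lra.
Qed.
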